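(* Let $\lambda_k,\varphi_k$ ($k=1,\dots,n$) be nonnegative integrable random variables on a probability space, and put $\lambda_0=0$. (i) If $\lambda_k=\mathbb{E}\sqrt{\varphi_k^2+\lambda_{k-1}^2}$ for $k=1,\dots,n$, then \[\max\big(\|(\varphi_k)_{k=1}^n\|_{L^1(\ell^2)},\|(\varphi_k)_{k=1}^n\|_{\mathrm{ind}}\big)\le2\lambda_n.\] (ii) If $\mathbb{E}\lambda_k\ge\mathbb{E}\sqrt{\varphi_k^2+\lambda_{k-1}^2}$ for $k=1,\dots,n$ and the $\lambda_k$ are bounded, then \[\max\big(\|(\varphi_k)_{k=1}^n\|_{L^1(\ell^2)},\|(\varphi_k)_{k=1}^n\|_{\mathrm{ind}}\big)\le(1+2^{1/2})\sqrt{\mathbb{E}\lambda_n}\sqrt{\max_{1\le k\le n}\sup\lambda_k}.\]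
   Context: For random variables $g_1,\dots,g_n$ on a probability space $(\Omega,\mu)$: $\|(g_k)\|_{L^1(\ell^2)}=\mathbb{E}(\sum_k|g_k|^2)^{1/2}$ and $\|(g_k)\|_{\mathrm{ind}}=\int_{\Omega^n}(\sum_k|g_k(\omega_k)|^2)^{1/2}d\mu(\omega_1)\cdots d\mu(\omega_n)$. In (i) the $\lambda_k$ are constants (for $k\ge1$). *)

From HB Require Import structures.
From mathcomp Require Import all_boot all_order all_algebra.
From mathcomp Require Import all_classical all_reals all_analysis.
Set Implicit Arguments. Unset Strict Implicit. Unset Printing Implicit Defensive.
Import Order.TTheory GRing.Theory Num.Theory.
Local Open Scope ring_scope.
Local Open Scope classical_set_scope.

Section Norms.
Context {d : measure_display} {T : measurableType d} {R : realType}.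
Variable mu : {measure set T -> \bar R}.

Definition L1l2_norm (g : nat -> T -> R) (n : nat) : \bar R :=
  (\int[mu]_x (Num.sqrt (\sum_(1 <= k < n.+1) `|g k x| ^+ 2))%:E)%E.

Fixpoint ind_iter (g : nat -> T -> R) (ks : seq nat) (s : R) : \bar R :=
  match ks with
  | [::] => (Num.sqrt s)%:E
  | k :: ks' => (\int[mu]_x ind_iter g ks' (s + `|g k x| ^+ 2))%E
  end.

(* || (g_k)_{k=1}^n ||_ind = int_{Omega^n} (sum_k |g_k(omega_k)|^2)^{1/2}
   d mu(omega_1) ... d mu(omega_n)  (as an iterated integral) *)
Definition ind_norm (g : nat -> T -> R) (n : nat) : \bar R :=
  ind_iter g (iota 1 n) 0.

End Norms.

From HB Require Import structures.
From mathcomp Require Import all_boot all_order all_algebra.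
From mathcomp Require Import all_classical all_reals all_analysis.
From mathcomp Require Import measurable_realfun ring lra.
Import Order.TTheory GRing.Theory Num.Theory.
Local Open Scope ring_scope.

(* With d_k := sqrt (phi_k^2 + lambda_(k-1)^2) - lambda_(k-1) >= 0 one has
   phi_k^2 = d_k^2 + 2 lambda_(k-1) d_k <= d_k^2 + e_k, where e_k := 2 w_k d_k
   for any bound w_k of lambda_(k-1); summing,
   sum_k phi_k^2 <= (sum_k d_k)^2 + sum_k e_k, whether all the phi_k are taken
   at the same point or at independent coordinates.  Bounding the concave
   square root by its tangents, sqrt (a^2 + b) <= a + b / (2c) + c / 2, makes
   the right-hand side affine in the d_k and e_k, so it can be integrated one
   coordinate at a time: both norms are at most
   sum_k E d_k + (sum_k E e_k) / (2c) + c / 2 for every c > 0, hence at most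
   sum_k E d_k + sqrt (sum_k E e_k).  In (i), E d_k = lambda_k - lambda_(k-1)
   telescopes and 2 lambda_(k-1) (lambda_k - lambda_(k-1)) <=
   lambda_k^2 - lambda_(k-1)^2; in (ii), sum_k E d_k <= E lambda_n and every
   w_k is the uniform bound of the lambda_j. *)

Section sqrt_bounds.
Context {R : rcfType}.
Implicit Types a b c f g s w : R.

Lemma sqrt_le_tangent {a b c s} : 0 < c -> 0 <= a -> 0 <= b ->
  s <= a ^+ 2 + b -> Num.sqrt s <= a + b / (2 * c) + c / 2.
Proof.
move=> c_gt0 a_ge0 b_ge0 sab.
have sqrt_b_ge0 := sqrtr_ge0 b; have sqrt_bK : Num.sqrt b ^+ 2 = b by rewrite sqr_sqrtr.
have sqrt_le_add : Num.sqrt s <= a + Num.sqrt b.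
  rewrite -(ger0_norm (addr_ge0 a_ge0 sqrt_b_ge0)) -sqrtr_sqr ler_sqrt ?sqr_ge0 //.
  nra.
suff : Num.sqrt b <= b / (2 * c) + c / 2 by lra.
have -> : b / (2 * c) + c / 2 = Num.sqrt b + (Num.sqrt b - c) ^+ 2 / (2 * c).
  by rewrite -[in LHS]sqrt_bK; field; rewrite gt_eqF.
by rewrite lerDl divr_ge0 ?sqr_ge0 // mulr_ge0 // ltW.
Qed.

Lemma sumr_sqr_le (I : eqType) (r : seq I) (F G H : I -> R) :
  (forall i, i \in r -> 0 <= G i /\ F i ^+ 2 <= G i ^+ 2 + H i) ->
  \sum_(i <- r) F i ^+ 2 <= (\sum_(i <- r) G i) ^+ 2 + \sum_(i <- r) H i.
Proof.
elim: r => [|i r IHr] FGH; first by rewrite !big_nil expr0n addr0.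
have [Gi_ge0 FGHi] := FGH i (mem_head i r).
have FGHr j (jr : j \in r) := FGH j (mem_behead (s := i :: r) jr).
have sumG_ge0 : 0 <= \sum_(j <- r) G j.
  by rewrite big_seq sumr_ge0 // => j /FGHr[].
have := IHr FGHr; rewrite !big_cons; nra.
Qed.

Lemma hypot_subr_ge0 f g : 0 <= g -> 0 <= Num.sqrt (f ^+ 2 + g ^+ 2) - g.
Proof.
move=> g_ge0; rewrite subr_ge0 -{1}(ger0_norm g_ge0) -sqrtr_sqr.
by rewrite ler_sqrt ?addr_ge0 ?sqr_ge0 // lerDr sqr_ge0.
Qed.

Lemma sqr_le_hypot_subr f g w : 0 <= g <= w ->
  f ^+ 2 <= (Num.sqrt (f ^+ 2 + g ^+ 2) - g) ^+ 2
            + 2 * w * (Num.sqrt (f ^+ 2 + g ^+ 2) - g).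
Proof.
case/andP=> g_ge0 gw; have gap_ge0 := hypot_subr_ge0 f g g_ge0.
have hypotK : Num.sqrt (f ^+ 2 + g ^+ 2) ^+ 2 = f ^+ 2 + g ^+ 2.
  by rewrite sqr_sqrtr // addr_ge0 ?sqr_ge0.
nra.
Qed.

Lemma add_sqrt_le_mul_sqrt {L M : R} : 0 <= L <= M ->
  L + Num.sqrt (2 * M * L) <= (1 + Num.sqrt 2) * Num.sqrt L * Num.sqrt M.
Proof.
case/andP=> L_ge0 LM; have M_ge0 := le_trans L_ge0 LM.
rewrite -mulrA sqrtrM ?mulr_ge0 // sqrtrM //.
have sqrtLK := sqr_sqrtr L_ge0.
have sqrtLM : Num.sqrt L <= Num.sqrt M by rewrite ler_sqrt.
have := sqrtr_ge0 L; have := sqrtr_ge0 (2 : R); nra.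
Qed.

End sqrt_bounds.

Lemma mem_iota1 n k : (k \in iota 1 n) = (1 <= k <= n)%N.
Proof. by rewrite mem_iota add1n ltnS. Qed.

Lemma sumr_iota_telescope (V : zmodType) (u : nat -> V) n :
  \sum_(k <- iota 1 n) (u k - u k.-1) = u n - u 0.
Proof.
have -> : iota 1 n = index_iota 1 n.+1 by rewrite /index_iota subSS subn0.
by rewrite big_add1 /= telescope_sumr.
Qed.

Lemma lee_addr_sqrt_tangents (R : realType) (X : \bar R) (A Q : R) : 0 <= Q ->
  (forall c, 0 < c -> (X <= (A + Q / (2 * c) + c / 2)%:E)%E) ->
  (X <= (A + Num.sqrt Q)%:E)%E.
Proof.
move=> Q_ge0 XAQ; have [Q_gt0|] := ltrP 0 Q.
  have sqrtQ_gt0 : 0 < Num.sqrt Q by rewrite sqrtr_gt0.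
  apply: le_trans (XAQ _ sqrtQ_gt0) _.
  have -> : Q / (2 * Num.sqrt Q) = Num.sqrt Q / 2.
    by rewrite -{1}(sqr_sqrtr Q_ge0); field; rewrite gt_eqF.
  by rewrite lee_fin; lra.
move=> Q_le0; have Q0 : Q = 0 by apply/eqP; rewrite eq_le Q_le0 Q_ge0.
subst Q.
rewrite sqrtr0 addr0; apply/lee_addgt0Pr => e e_gt0.
apply: le_trans (XAQ (2 * e) _) _; first by rewrite mulr_gt0.
by rewrite mul0r addr0 -EFinD lee_fin; lra.
Qed.

Local Open Scope classical_set_scope.

Section integral_facts.
Context {d : measure_display} {T : measurableType d} {R : realType}.
Variable mu : {measure set T -> \bar R}.

(* Unlike [ge0_le_integral], no measurability is required: the integrands
   [ind_iter] produces are not known to be measurable. *)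
Lemma ge0_le_integralT (f g : T -> \bar R) : (forall x, (0 <= f x)%E) ->
  (forall x, (f x <= g x)%E) -> (\int[mu]_x f x <= \int[mu]_x g x)%E.
Proof.
move=> f_ge0 fg; have g_ge0 x : (0 <= g x)%E by apply: le_trans (f_ge0 x) (fg x).
rewrite !ge0_integralTE //; apply: ereal_sup_le => _ [h hf <-].
by exists h => //= x; apply: le_trans (hf x) (fg x).
Qed.

Lemma EFin_Rintegral (f : T -> R) : mu.-integrable setT (EFin \o f) ->
  (\int[mu]_x f x)%:E = (\int[mu]_x (f x)%:E)%E.
Proof. by move=> f_int; rewrite fineK //; exact: integrable_fin_num. Qed.

Lemma integrable_sumr_in {I : eqType} {r : seq I} {f : I -> T -> R} :
  (forall i, i \in r -> mu.-integrable setT (EFin \o f i)) ->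
  mu.-integrable setT (EFin \o (fun x => \sum_(i <- r) f i x)).
Proof.
elim: r => [|i r IHr] f_int.
  apply: (eq_integrable measurableT (cst 0)); last exact: integrable0.
  by move=> x _; rewrite /= big_nil.
have f_int_r j (jr : j \in r) := f_int j (mem_behead (s := i :: r) jr).
apply: (eq_integrable measurableT
  ((EFin \o f i) \+ (EFin \o (fun x => \sum_(j <- r) f j x)))).
  by move=> x _; rewrite /= big_cons EFinD.
exact: integrableD (f_int i (mem_head i r)) (IHr f_int_r).
Qed.

Lemma Rintegral_sumr_in {I : eqType} {r : seq I} {f : I -> T -> R} :
  (forall i, i \in r -> mu.-integrable setT (EFin \o f i)) ->
  \int[mu]_x (\sum_(i <- r) f i x) = \sum_(i <- r) \int[mu]_x f i x.
Proof.
elim: r => [|i r IHr] f_int.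
  by under eq_Rintegral do rewrite big_nil; rewrite big_nil Rintegral_cst // mul0r.
have f_int_r j (jr : j \in r) := f_int j (mem_behead (s := i :: r) jr).
under eq_Rintegral do rewrite big_cons.
rewrite RintegralD //; first by rewrite IHr // big_cons.
- exact: f_int (mem_head i r).
- exact: integrable_sumr_in.
Qed.

End integral_facts.

Lemma Rintegral_cst_probability {d : measure_display} {T : measurableType d}
    {R : realType} (P : probability T R) (r : R) : \int[P]_x r = r.
Proof.
rewrite Rintegral_cst // -[RHS]mulr1; congr (_ * _).
by have := probability_setT P => /= ->.
Qed.

Lemma ind_iter_ge0 {d : measure_display} {T : measurableType d} {R : realType}
    (mu : {measure set T -> \bar R}) (g : nat -> T -> R) ks s :
  (0 <= ind_iter mu g ks s)%E.
Proof.
elim: ks s => [|k ks IHks] s /=; first by rewrite lee_fin sqrtr_ge0.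
by apply: integral_ge0 => x _; exact: IHks.
Qed.

Section domination.
Context {d : measure_display} {T : measurableType d} {R : realType}.
Variable P : probability T R.
Variables phi dd ee : nat -> T -> R.

Definition sqr_dominated k :=
  [/\ P.-integrable setT (EFin \o dd k), P.-integrable setT (EFin \o ee k)
    & forall x, [/\ 0 <= dd k x, 0 <= ee k x
                  & `|phi k x| ^+ 2 <= dd k x ^+ 2 + ee k x]].

Let D k := \int[P]_x dd k x.
Let E k := \int[P]_x ee k x.

Lemma integral_tangent_sum (ks : seq nat) (C K : R) :
  (forall k, k \in ks -> sqr_dominated k) ->
  (\int[P]_x (C + \sum_(k <- ks) (dd k x + ee k x * K))%:E)%E =
  (C + \sum_(k <- ks) (D k + E k * K))%:E.
Proof.
move=> ks_dom.
have ee_intK k : k \in ks -> P.-integrable setT (EFin \o (fun x => ee k x * K)).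
  by move=> /ks_dom[_ ee_int _]; exact: (integrableZr measurableT K ee_int).
have term_int k :
    k \in ks -> P.-integrable setT (EFin \o (fun x => dd k x + ee k x * K)).
  move=> kks; have [dd_int _ _] := ks_dom k kks.
  exact: (integrableD measurableT dd_int (ee_intK k kks)).
have C_int := finite_measure_integrable_cst P C measurableT.
have sum_int := integrable_sumr_in P term_int.
rewrite -(EFin_Rintegral P); last exact: (integrableD measurableT C_int sum_int).
rewrite RintegralD ?(Rintegral_cst_probability P) ?(Rintegral_sumr_in P) //.
congr (_ + _)%:E; apply: eq_big_seq => k kks; have [dd_int ee_int _] := ks_dom k kks.
by rewrite RintegralD ?RintegralZr // ee_intK.
Qed.

Lemma L1l2_le_tangent {ks : seq nat} {c} : 0 < c ->
  (forall k, k \in ks -> sqr_dominated k) ->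
  (\int[P]_x (Num.sqrt (\sum_(k <- ks) `|phi k x| ^+ 2))%:E <=
   (\sum_(k <- ks) D k + (\sum_(k <- ks) E k) / (2 * c) + c / 2)%:E)%E.
Proof.
move=> c_gt0 ks_dom.
pose tangent x := c / 2 + \sum_(k <- ks) (dd k x + ee k x / (2 * c)).
apply: (@le_trans _ _ (\int[P]_x (tangent x)%:E)%E).
  apply: ge0_le_integralT => x; first by rewrite lee_fin sqrtr_ge0.
  have ks_dom_x k : k \in ks -> [/\ 0 <= dd k x, 0 <= ee k x
      & `|phi k x| ^+ 2 <= dd k x ^+ 2 + ee k x] by case/ks_dom.
  have dd_sum_ge0 : 0 <= \sum_(k <- ks) dd k x.
    by rewrite big_seq sumr_ge0 // => k /ks_dom_x[].
  have ee_sum_ge0 : 0 <= \sum_(k <- ks) ee k x.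
    by rewrite big_seq sumr_ge0 // => k /ks_dom_x[].
  have phi_sum_le : \sum_(k <- ks) `|phi k x| ^+ 2 <=
      (\sum_(k <- ks) dd k x) ^+ 2 + \sum_(k <- ks) ee k x.
    by apply: sumr_sqr_le => k /ks_dom_x[].
  have := sqrt_le_tangent c_gt0 dd_sum_ge0 ee_sum_ge0 phi_sum_le.
  by rewrite lee_fin /tangent big_split /= -mulr_suml; lra.
rewrite integral_tangent_sum // lee_fin big_split /= -mulr_suml; lra.
Qed.

Lemma ind_iter_le_tangent {ks : seq nat} {c} : 0 < c ->
  (forall k, k \in ks -> sqr_dominated k) ->
  forall s a b, 0 <= a -> 0 <= b -> s <= a ^+ 2 + b ->
  (ind_iter P phi ks s <=
   (a + \sum_(k <- ks) D k + (b + \sum_(k <- ks) E k) / (2 * c) + c / 2)%:E)%E.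
Proof.
move=> c_gt0; elim: ks => [|k ks IHks] ks_dom s a b a_ge0 b_ge0 sab /=.
  by rewrite !big_nil !addr0 lee_fin; exact: sqrt_le_tangent.
have k_dom := ks_dom k (mem_head k ks).
have {}IHks := IHks (fun j jks => ks_dom j (mem_behead (s := k :: ks) jks)).
set C := a + \sum_(j <- ks) D j + (b + \sum_(j <- ks) E j) / (2 * c) + c / 2.
apply: (@le_trans _ _
  (\int[P]_x (C + \sum_(j <- [:: k]) (dd j x + ee j x / (2 * c)))%:E)%E).
  apply: ge0_le_integralT => x; first exact: ind_iter_ge0.
  have [_ _ /(_ x)[dd_ge0 ee_ge0 phi_le]] := k_dom.
  apply: le_trans (IHks _ (a + dd k x) (b + ee k x) _ _ _) _.
  - exact: addr_ge0.
  - exact: addr_ge0.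
  - nra.
  - by rewrite big_seq1 lee_fin /C; lra.
rewrite integral_tangent_sum => [|j]; last by rewrite mem_seq1 => /eqP->.
by rewrite big_seq1 !big_cons lee_fin /C; lra.
Qed.

Lemma norms_le_sum_add_sqrt n :
  (forall k, (1 <= k <= n)%N -> sqr_dominated k) ->
  (maxe (L1l2_norm P phi n) (ind_norm P phi n) <=
   (\sum_(k <- iota 1 n) D k + Num.sqrt (\sum_(k <- iota 1 n) E k))%:E)%E.
Proof.
move=> n_dom; have ks_dom k : k \in iota 1 n -> sqr_dominated k.
  by rewrite mem_iota1 => /n_dom.
apply: lee_addr_sqrt_tangents => [|c c_gt0].
  rewrite big_seq sumr_ge0 // => k /ks_dom[_ _ kx_dom].
  by apply: Rintegral_ge0 => x _; case: (kx_dom x).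
rewrite ge_max; apply/andP; split.
  by rewrite /L1l2_norm /index_iota subSS subn0; exact: L1l2_le_tangent.
have := ind_iter_le_tangent c_gt0 ks_dom 0 0 0 (lexx 0) (lexx 0).
by rewrite !add0r expr0n addr0 lexx => /(_ isT).
Qed.

End domination.

Section hypot.
Context {d : measure_display} {T : measurableType d} {R : realType}.
Variables (P : probability T R) (f g : T -> R).
Hypotheses (f_meas : measurable_fun setT f) (f_int : P.-integrable setT (EFin \o f)).
Hypotheses (g_meas : measurable_fun setT g) (g_int : P.-integrable setT (EFin \o g)).
Hypotheses (f_ge0 : forall x, 0 <= f x) (g_ge0 : forall x, 0 <= g x).

Lemma integrable_hypot :
  P.-integrable setT (EFin \o (fun x => Num.sqrt (f x ^+ 2 + g x ^+ 2))).
Proof.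
apply: (le_integrable measurableT _ _ (integrableD measurableT f_int g_int)).
  apply/measurable_EFinP; apply: measurableT_comp.
    exact: continuous_measurable_fun (@sqrt_continuous R).
  by apply: measurable_funD; exact: measurable_funX.
move=> x _; rewrite /= lee_fin ger0_norm ?sqrtr_ge0 // ger0_norm ?addr_ge0 //.
rewrite -(ger0_norm (addr_ge0 (f_ge0 x) (g_ge0 x))) -sqrtr_sqr ler_sqrt ?sqr_ge0 //.
have := f_ge0 x; have := g_ge0 x; nra.
Qed.

End hypot.

Definition hypot_excess {d : measure_display} {T : measurableType d} {R : realType}
    (P : probability T R) (f g : T -> R) : R :=
  \int[P]_x Num.sqrt (f x ^+ 2 + g x ^+ 2) - \int[P]_x g x.

Lemma norms_le_hypot {d : measure_display} {T : measurableType d} {R : realType}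
    (P : probability T R) n (phi g : nat -> T -> R) (w : nat -> R) :
  (forall k, (1 <= k <= n)%N -> measurable_fun setT (phi k) /\
     P.-integrable setT (EFin \o phi k) /\ (forall x, 0 <= phi k x)) ->
  (forall k, (1 <= k <= n)%N -> [/\ measurable_fun setT (g k),
     P.-integrable setT (EFin \o g k) & forall x, 0 <= g k x <= w k]) ->
  (maxe (L1l2_norm P phi n) (ind_norm P phi n) <=
   (\sum_(k <- iota 1 n) hypot_excess P (phi k) (g k)
    + Num.sqrt (\sum_(k <- iota 1 n) 2 * w k * hypot_excess P (phi k) (g k)))%:E)%E.
Proof.
move=> phi_hyp g_hyp.
pose dd k x := Num.sqrt (phi k x ^+ 2 + g k x ^+ 2) - g k x.
pose ee k x := 2 * w k * dd k x.
have dd_dom k : (1 <= k <= n)%N -> [/\ sqr_dominated P phi dd ee k,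
    \int[P]_x dd k x = hypot_excess P (phi k) (g k)
  & \int[P]_x ee k x = 2 * w k * hypot_excess P (phi k) (g k)].
  move=> kn; have [phi_meas [phi_int phi_ge0]] := phi_hyp k kn.
  have [g_meas g_int g_bnd] := g_hyp k kn.
  have g_ge0 x : 0 <= g k x by case/andP: (g_bnd x).
  have hyp_int := integrable_hypot P _ _ phi_meas phi_int g_meas g_int phi_ge0 g_ge0.
  have dd_int : P.-integrable setT (EFin \o dd k).
    exact: (integrableB measurableT hyp_int g_int).
  have dd_excess : \int[P]_x dd k x = hypot_excess P (phi k) (g k).
    by rewrite RintegralB.
  split; rewrite ?RintegralZl ?dd_excess //; split => //.
    exact: (integrableZl measurableT (2 * w k) dd_int).
  move=> x; have dd_ge0 := hypot_subr_ge0 (phi k x) (g k x) (g_ge0 x).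
  have w_ge0 : 0 <= w k by case/andP: (g_bnd x) => /le_trans; apply.
  by rewrite real_normK ?num_real // mulr_ge0 ?mulr_ge0 // sqr_le_hypot_subr.
have n_dom k : (1 <= k <= n)%N -> sqr_dominated P phi dd ee k by case/dd_dom.
have dd_sum : \sum_(k <- iota 1 n) \int[P]_x dd k x =
    \sum_(k <- iota 1 n) hypot_excess P (phi k) (g k).
  by apply: eq_big_seq => k /[!mem_iota1]/dd_dom[].
have ee_sum : \sum_(k <- iota 1 n) \int[P]_x ee k x =
    \sum_(k <- iota 1 n) 2 * w k * hypot_excess P (phi k) (g k).
  by apply: eq_big_seq => k /[!mem_iota1]/dd_dom[].
by rewrite -dd_sum -ee_sum; exact: norms_le_sum_add_sqrt.
Qed.

Lemma norms_le_const_recursion {d : measure_display} {T : measurableType d}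
    {R : realType} (P : probability T R) n (phi : nat -> T -> R) (lam : nat -> R) :
  (forall k, (1 <= k <= n)%N -> measurable_fun setT (phi k) /\
     P.-integrable setT (EFin \o phi k) /\ (forall x, 0 <= phi k x)) ->
  lam 0%N = 0 -> (forall k, (1 <= k <= n)%N -> 0 <= lam k) ->
  (forall k, (1 <= k <= n)%N ->
     (lam k)%:E = (\int[P]_x (Num.sqrt (phi k x ^+ 2 + lam k.-1 ^+ 2))%:E)%E) ->
  (maxe (L1l2_norm P phi n) (ind_norm P phi n) <= (2 * lam n)%:E)%E.
Proof.
move=> phi_hyp lam0 lam_ge0 lam_rec.
have lam_le_ge0 k : (k <= n)%N -> 0 <= lam k.
  by case: k => [|k] kn; rewrite ?lam0 // lam_ge0.
have lam_prev_ge0 k : (1 <= k <= n)%N -> 0 <= lam k.-1.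
  by case/andP=> _ kn; apply: lam_le_ge0; rewrite (leq_trans (leq_pred k)).
have excess k : k \in iota 1 n ->
    hypot_excess P (phi k) (fun=> lam k.-1) = lam k - lam k.-1.
  rewrite mem_iota1 => kn.
  by rewrite /hypot_excess Rintegral_cst_probability {1}/Rintegral -lam_rec.
apply: le_trans
  (norms_le_hypot P n phi (fun k _ => lam k.-1) (fun k => lam k.-1) phi_hyp _) _.
  move=> k kn; split.
  - exact: measurable_cst.
  - exact: (finite_measure_integrable_cst P _ measurableT).
  - by move=> x; rewrite lexx andbT; exact: lam_prev_ge0.
rewrite (eq_big_seq _ excess) sumr_iota_telescope lam0 subr0.
rewrite (eq_big_seq (fun k => 2 * lam k.-1 * (lam k - lam k.-1))); last first.
  by move=> k /excess ->.
rewrite lee_fin mulr2n mulrDl mul1r lerD2l.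
have lam_n_ge0 := lam_le_ge0 n (leqnn n).
rewrite -[X in _ <= X](ger0_norm lam_n_ge0) -sqrtr_sqr ler_sqrt ?sqr_ge0 //.
apply: (le_trans (y := \sum_(k <- iota 1 n) (lam k ^+ 2 - lam k.-1 ^+ 2))).
  by apply: ler_sum => k _; have := sqr_ge0 (lam k - lam k.-1); nra.
by rewrite sumr_iota_telescope lam0 expr0n subr0.
Qed.

Lemma norms_le_bounded_recursion {d : measure_display} {T : measurableType d}
    {R : realType} (P : probability T R) n (phi lam : nat -> T -> R) :
  (forall k, (1 <= k <= n)%N -> measurable_fun setT (phi k) /\
     P.-integrable setT (EFin \o phi k) /\ (forall x, 0 <= phi k x)) ->
  (forall x, lam 0%N x = 0) ->
  (forall k, (1 <= k <= n)%N -> measurable_fun setT (lam k) /\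
     P.-integrable setT (EFin \o lam k) /\ (forall x, 0 <= lam k x)) ->
  (forall k, (1 <= k <= n)%N -> exists M : R, forall x, `|lam k x| <= M) ->
  (forall k, (1 <= k <= n)%N ->
     (\int[P]_x (Num.sqrt (phi k x ^+ 2 + lam k.-1 x ^+ 2))%:E
        <= \int[P]_x (lam k x)%:E)%E) ->
  (maxe (L1l2_norm P phi n) (ind_norm P phi n) <=
     ((1 + Num.sqrt 2) * Num.sqrt (\int[P]_x lam n x)
       * Num.sqrt (\big[Num.max/0]_(1 <= k < n.+1) sup (range (lam k))))%:E)%E.
Proof.
move=> phi_hyp lam0 lam_hyp lam_bnd lam_rec.
set M := \big[Num.max/0]_(1 <= k < n.+1) sup (range (lam k)).
have lam0E : lam 0%N = cst 0 by apply/funext => x; rewrite lam0.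
have lam_le_hyp j : (j <= n)%N -> [/\ measurable_fun setT (lam j),
    P.-integrable setT (EFin \o lam j) & forall x, 0 <= lam j x].
  case: j => [|j] jn; last by have [? []] := lam_hyp j.+1 jn.
  rewrite lam0E; split => //.
  exact: (finite_measure_integrable_cst P _ measurableT).
have M_ge0 : 0 <= M.
  by rewrite /M big_seq; elim/big_rec: _ => // k m _ m_ge0; rewrite le_max m_ge0 orbT.
have lam_le_M j x : (j <= n)%N -> lam j x <= M.
  case: j => [_|j jn]; first by rewrite lam0.
  have [Mj lamMj] := lam_bnd j.+1 jn.
  apply: (@le_trans _ _ (sup (range (lam j.+1)))).
    apply: ub_le_sup; last by exists x.
    by exists Mj => _ [y _ <-]; exact: le_trans (ler_norm _) (lamMj y).
  apply: (le_bigmax_seq _ _ (fun=> true) (fun k => sup (range (lam k)))) => //.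
  by rewrite mem_index_iota.
pose L j := \int[P]_x lam j x.
have prev_le k : (1 <= k <= n)%N -> (k.-1 <= n)%N.
  by case/andP=> _; apply: leq_trans (leq_pred k).
have excess_le k : k \in iota 1 n -> hypot_excess P (phi k) (lam k.-1) <= L k - L k.-1.
  rewrite mem_iota1 => kn; rewrite /hypot_excess lerD2r.
  have [phi_meas [phi_int phi_ge0]] := phi_hyp k kn.
  have [lam_meas lam_int lam_ge0] := lam_le_hyp _ (prev_le k kn).
  have [_ [lamk_int _]] := lam_hyp k kn.
  have hyp_int :=
    integrable_hypot P _ _ phi_meas phi_int lam_meas lam_int phi_ge0 lam_ge0.
  by rewrite -lee_fin /L !EFin_Rintegral // lam_rec.
have excess_sum_le : \sum_(k <- iota 1 n) hypot_excess P (phi k) (lam k.-1) <= L n.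
  apply: le_trans (_ : \sum_(k <- iota 1 n) (L k - L k.-1) <= _).
    by rewrite big_seq [leRHS]big_seq ler_sum.
  by rewrite sumr_iota_telescope /L lam0E Rintegral_cst_probability subr0.
have L_ge0 : 0 <= L n by apply: Rintegral_ge0 => x _; case: (lam_le_hyp n (leqnn n)).
have L_le_M : L n <= M.
  rewrite -[leRHS](Rintegral_cst_probability P) le_Rintegral //.
  - by case: (lam_le_hyp n (leqnn n)).
  - exact: (finite_measure_integrable_cst P _ measurableT).
  - by move=> x _; exact: lam_le_M.
apply: le_trans (norms_le_hypot P n phi (fun k => lam k.-1) (fun=> M) phi_hyp _) _.
  move=> k kn; have [lam_meas lam_int lam_ge0] := lam_le_hyp _ (prev_le k kn).
  by split => // x; rewrite lam_ge0 lam_le_M // prev_le.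
have L_bnd : 0 <= L n <= M by rewrite L_ge0 L_le_M.
rewrite lee_fin -mulr_sumr.
apply: le_trans _ (add_sqrt_le_mul_sqrt L_bnd).
rewrite lerD ?ler_sqrt ?ler_wpM2l ?mulr_ge0 //.
Qed.

Theorem lemma1p5 (d : measure_display) (T : measurableType d) (R : realType)
  (P : probability T R) (n : nat) (phi : nat -> T -> R) :
  (forall k, (1 <= k <= n)%N ->
     measurable_fun setT (phi k) /\ P.-integrable setT (EFin \o phi k) /\
     (forall x, 0 <= phi k x)) ->
  (* (i) the lambda_k are constants *)
  (forall lam : nat -> R,
     lam 0%N = 0 ->
     (forall k, (1 <= k <= n)%N -> 0 <= lam k) ->
     (forall k, (1 <= k <= n)%N ->
        (lam k)%:E =
        (\int[P]_x (Num.sqrt (phi k x ^+ 2 + lam k.-1 ^+ 2))%:E)%E) ->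
     (maxe (L1l2_norm P phi n) (ind_norm P phi n) <= (2 * lam n)%:E)%E) /\
  (* (ii) *)
  (forall lam : nat -> T -> R,
     (forall x, lam 0%N x = 0) ->
     (forall k, (1 <= k <= n)%N ->
        measurable_fun setT (lam k) /\ P.-integrable setT (EFin \o lam k) /\
        (forall x, 0 <= lam k x)) ->
     (forall k, (1 <= k <= n)%N -> exists M : R, forall x, `|lam k x| <= M) ->
     (forall k, (1 <= k <= n)%N ->
        (\int[P]_x (Num.sqrt (phi k x ^+ 2 + lam k.-1 x ^+ 2))%:E
           <= \int[P]_x (lam k x)%:E)%E) ->
     (maxe (L1l2_norm P phi n) (ind_norm P phi n) <=
        ((1 + Num.sqrt 2) * Num.sqrt (fine (\int[P]_x (lam n x)%:E)%E)
          * Num.sqrt (\big[Num.max/0]_(1 <= k < n.+1) sup (range (lam k))))%:E)%E).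
Proof.
move=> phi_hyp; split=> lam.
- exact: norms_le_const_recursion.
- exact: norms_le_bounded_recursion.
Qed.
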